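(* Let $\mathcal{A}\subset\mathbb{N}$ be an alphabet. If the semigroup $\Gamma_{\mathcal{A}}$ does not have everywhere strong approximation, then there exist an integer $k^{\ast}\ge 2$ and a residue $r \pmod{k^{\ast}}$ such that $\mathcal{A}\subseteq r+k^{\ast}\mathbb{Z}$.
   Context: For $a\in\mathbb{N}$ let $\gamma_a=\begin{pmatrix}0&1\\1&a\end{pmatrix}$. $\mathcal{G}_{\mathcal{A}}\subset \mathrm{GL}_2(\mathbb{Z})$ is the semigroup generated by $\gamma_a$, $a\in\mathcal{A}$, and $\Gamma_{\mathcal{A}}\subset\mathrm{SL}_2(\mathbb{Z})$ is its determinant-one subsemigroup, generated by the products $\gamma_a\gamma_{a'}$, $a,a'\in\mathcal{A}$. $\Gamma_{\mathcal{A}}$ has everywhere strong approximation if for every $q\in\mathbb{N}$ the reduction of $\Gamma_{\mathcal{A}}$ modulo $q$ equals $\mathrm{SL}_2(\mathbb{Z}/q\mathbb{Z})$. *)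

From mathcomp Require Import all_boot all_order all_algebra.
Set Implicit Arguments. Unset Strict Implicit. Unset Printing Implicit Defensive.
Import GRing.Theory Num.Theory.
Local Open Scope ring_scope.

Definition gamma (a : nat) : 'M[int]_2 :=
  \matrix_(i < 2, j < 2)
    if (i == 0 :> nat) && (j == 0 :> nat) then 0
    else if (i == 1 :> nat) && (j == 1 :> nat) then a%:Z else 1.

Inductive GammaA (A : nat -> Prop) : 'M[int]_2 -> Prop :=
  | GammaA_gen a a' : A a -> A a' -> GammaA A (gamma a *m gamma a')
  | GammaA_mul g h : GammaA A g -> GammaA A h -> GammaA A (g *m h).

Definition mx_congr (q : nat) (M N : 'M[int]_2) : Prop :=
  forall i j : 'I_2, (M i j = N i j %[mod q%:Z])%Z.

(* Elements of
   SL_2(Z/qZ) are represented by integer matrices M with det M = 1 mod q;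
   equality of sets = (image contained in SL_2(Z/qZ)) and (surjectivity). *)
Definition reduction_is_SL2 (A : nat -> Prop) (q : nat) : Prop :=
  (forall g, GammaA A g -> (\det g = 1 %[mod q%:Z])%Z) /\
  (forall M : 'M[int]_2, (\det M = 1 %[mod q%:Z])%Z ->
     exists2 g, GammaA A g & mx_congr q g M).

Definition everywhere_strong_approx (A : nat -> Prop) : Prop :=
  forall q : nat, (0 < q)%N -> reduction_is_SL2 A q.

(* Reduction mod q turns Gamma_A into a group, since every element has finite
   order mod q.  As gamma_c gamma_a = gamma_c^2 U(a - c) and
   gamma_a gamma_c = L(a - c) gamma_c^2, this group contains the unipotents
   U(a - c) and L(a - c).  If A lies in no progression r + kZ with k >= 2, the
   differences a - c generate Z, so the group contains every U(t) and L(t); and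
   these generate SL_2(Z/qZ), by a Euclidean algorithm on the top-right entry
   followed by an explicit word for lower triangular matrices. *)

From mathcomp Require Import all_boot all_order all_algebra.
From mathcomp Require Import ring boolp.
Set Implicit Arguments. Unset Strict Implicit. Unset Printing Implicit Defensive.
Import GRing.Theory.
Local Open Scope ring_scope.

Section Matrix2.
Variable R : comPzRingType.

Definition mx2 (a b c d : R) : 'M[R]_2 :=
  \matrix_(i, j) if i == 0 then (if j == 0 then a else b)
                 else (if j == 0 then c else d).

Lemma ord2P (i : 'I_2) : i = 0 \/ i = 1.
Proof. by case: i => [[|[|i]] Hi] //; [left|right]; apply: val_inj. Qed.

Lemma mx2_eta (M : 'M[R]_2) : M = mx2 (M 0 0) (M 0 1) (M 1 0) (M 1 1).
Proof.
by apply/matrixP => i j; rewrite !mxE; case: (ord2P i) => ->; case: (ord2P j) => ->.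
Qed.

Lemma mx2_1 : 1%:M = mx2 1 0 0 1.
Proof.
by apply/matrixP => i j; rewrite !mxE; case: (ord2P i) => ->; case: (ord2P j) => ->.
Qed.

Lemma mulmx_mx2 a b c d a' b' c' d' :
  mx2 a b c d *m mx2 a' b' c' d' =
  mx2 (a * a' + b * c') (a * b' + b * d') (c * a' + d * c') (c * b' + d * d').
Proof.
apply/matrixP => i j; rewrite !mxE !big_ord_recl big_ord0 !mxE /= addr0.
by case: (ord2P i) => ->; case: (ord2P j) => ->.
Qed.

Lemma det_mx2 a b c d : \det (mx2 a b c d) = a * d - b * c.
Proof.
rewrite (expand_det_row _ 0) !big_ord_recl big_ord0 /cofactor !mxE /=.
by rewrite !det_mx11 !mxE /= /bump /=; ring.
Qed.

Definition elemU (t : R) := mx2 1 t 0 1.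
Definition elemL (t : R) := mx2 1 0 t 1.

Lemma elemUD s t : elemU s *m elemU t = elemU (s + t).
Proof. by rewrite mulmx_mx2 /elemU; congr mx2; ring. Qed.

Lemma elemLD s t : elemL s *m elemL t = elemL (s + t).
Proof. by rewrite mulmx_mx2 /elemL; congr mx2; ring. Qed.

Lemma elemU0 : elemU 0 = 1%:M. Proof. by rewrite mx2_1. Qed.
Lemma elemL0 : elemL 0 = 1%:M. Proof. by rewrite mx2_1. Qed.

End Matrix2.

Section Congruence.
Variable q : nat.
Implicit Types M N : 'M[int]_2.

Lemma mx_congr_refl M : mx_congr q M M. Proof. by []. Qed.

Lemma mx_congr_sym M N : mx_congr q M N -> mx_congr q N M.
Proof. by move=> h i j; rewrite h. Qed.

Lemma mx_congr_trans M N P : mx_congr q M N -> mx_congr q N P -> mx_congr q M P.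
Proof. by move=> h1 h2 i j; rewrite h1 h2. Qed.

Lemma mx_congr_dvd M N : mx_congr q M N <-> forall i j, (q%:Z %| M i j - N i j)%Z.
Proof. by split=> h i j; [rewrite -eqz_mod_dvd; apply/eqP | apply/eqP; rewrite eqz_mod_dvd]. Qed.

Lemma mx_congrM M M' N N' :
  mx_congr q M M' -> mx_congr q N N' -> mx_congr q (M *m N) (M' *m N').
Proof.
move=> /mx_congr_dvd hM /mx_congr_dvd hN; apply/mx_congr_dvd => i j.
have split_diff (x x' y y' u u' v v' : int) : x * y + u * v - (x' * y' + u' * v')
    = (x - x') * y + x' * (y - y') + ((u - u') * v + u' * (v - v')) by ring.
rewrite !mxE !big_ord_recl !big_ord0 !addr0 split_diff.
by rewrite !rpredD //; first [exact: dvdz_mulr | exact: dvdz_mull].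
Qed.

Lemma mx_congr_addZ N D k : mx_congr q (N + (k * q%:Z) *: D) N.
Proof.
by apply/mx_congr_dvd => i j; rewrite !mxE addrAC subrr add0r mulrAC dvdz_mull.
Qed.

Lemma mx_congr_mx2 a b c d a' b' c' d' :
  (a = a' %[mod q])%Z -> (b = b' %[mod q])%Z -> (c = c' %[mod q])%Z ->
  (d = d' %[mod q])%Z -> mx_congr q (mx2 a b c d) (mx2 a' b' c' d').
Proof.
move=> ha hb hc hd i j; rewrite !mxE.
by case: (ord2P i) => ->; case: (ord2P j) => ->.
Qed.

End Congruence.

Lemma finType_seq_repeats (T : finType) (f : nat -> T) :
  exists i j, (i < j)%N /\ f i = f j.
Proof.
pose h (k : 'I_#|T|.+1) := f k.
have : ~~ injectiveb h.
  by apply/injectiveP => /leq_card; rewrite card_ord ltnn.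
case/injectivePn => i [j ij hij].
case: (ltngtP i j) => [lt|gt|eq]; first by exists i, j.
- by exists j, i.
- by rewrite (val_inj eq) eqxx in ij.
Qed.

Definition modz_ord (p : nat) (x : int) : 'I_p.+1 := inord `|(x %% p.+1)%Z|%N.

Lemma modz_ord_eq p x y : modz_ord p x = modz_ord p y -> (x = y %[mod p.+1])%Z.
Proof.
have mod_ge0 z : 0 <= (z %% p.+1)%Z by apply: modz_ge0.
have mod_lt z : (`|(z %% p.+1)%Z| < p.+1)%N.
  by rewrite -ltz_nat gez0_abs // ltz_mod.
move=> /(congr1 val); rewrite /= !inordK // => e.
by rewrite -(gez0_abs (mod_ge0 x)) -(gez0_abs (mod_ge0 y)) e.
Qed.

Lemma unit_exp_congr1 q (g : 'M[int]_2) : (0 < q)%N -> g \in unitmx ->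
  exists2 m, (0 < m)%N & mx_congr q (g ^+ m) 1%:M.
Proof.
case: q => // p _ g_unit.
have [i [j [ij]]] := finType_seq_repeats (fun k => map_mx (modz_ord p) (g ^+ k)).
move=> /matrixP e; have gij : mx_congr p.+1 (g ^+ i) (g ^+ j).
  by move=> a b; apply: modz_ord_eq; move: (e a b); rewrite !mxE.
exists (j - i)%N; first by rewrite subn_gt0.
have gi_unit : g ^+ i \is a GRing.unit by rewrite unitrX.
have := mx_congrM (mx_congr_refl _ (g ^+ i)^-1) gij.
have -> : g ^+ j = g ^+ i * g ^+ (j - i) by rewrite -exprD subnKC // ltnW.
by rewrite !mulmxE mulrA mulVr // mul1r => /mx_congr_sym.
Qed.

Lemma int_subgroup_dvdz (S : int -> Prop) (n : nat) : (0 < n)%N -> S n%:Z ->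
  (forall s t, S s -> S t -> S (s - t)) ->
  exists2 d : nat, (0 < d)%N & forall t, S t <-> (d%:Z %| t)%Z.
Proof.
move=> n_gt0 Sn SB.
have S0 : S 0 by rewrite -(subrr n%:Z); apply: SB.
have SN t : S t -> S (- t) by move=> St; rewrite -sub0r; apply: SB.
have SD s t : S s -> S t -> S (s + t).
  by move=> Ss St; rewrite -[t]opprK; apply: SB => //; apply: SN.
have SM d : S d -> forall k : int, S (k * d).
  move=> Sd; have Snat m : S (m%:Z * d).
    by elim: m => [|m IH]; rewrite ?mul0r // -addn1 PoszD mulrDl mul1r; apply: SD.
  by case=> m; [apply: Snat | rewrite NegzE mulNr; apply/SN/Snat].
have ex_pos : exists m, `[< (0 < m)%N /\ S m%:Z >] by exists n; apply/asboolP.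
case: (ex_minnP ex_pos) => d /asboolP [d_gt0 Sd] d_min.
exists d => // t; split => [St | /dvdzP [k ->]]; last exact: SM.
have d_neq0 : d%:Z != 0 by rewrite eqz_nat -lt0n.
have S_r : S (t %% d%:Z)%Z by apply: SB St (SM _ Sd _).
apply/dvdz_mod0P/eqP; apply: contraT => r_neq0.
have r_ge0 := modz_ge0 t d_neq0.
have := ltz_pmod t (d_gt0 : 0 < d%:Z).
rewrite -(gez0_abs r_ge0) ltz_nat ltnNge d_min //.
by apply/asboolP; rewrite gez0_abs // absz_gt0.
Qed.

Definition in_progression (A : nat -> Prop) (k : nat) :=
  exists r : int, forall a, A a -> (a%:Z = r %[mod k%:Z])%Z.

Lemma gammaE a : gamma a = mx2 0 1 1 a%:Z.
Proof.
by apply/matrixP => i j; rewrite !mxE; case: (ord2P i) => ->; case: (ord2P j) => ->.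
Qed.

Section GammaModq.
Variables (A : nat -> Prop) (q : nat).
Hypothesis q_gt0 : (0 < q)%N.

Lemma det_GammaA g : GammaA A g -> \det g = 1.
Proof.
elim=> [a a' _ _ | g1 g2 _ dg1 _ dg2]; rewrite det_mulmx; last by rewrite dg1 dg2 mulr1.
by rewrite !gammaE !det_mx2; ring.
Qed.

Lemma GammaA_exp g n : GammaA A g -> GammaA A (g ^+ n.+1).
Proof.
move=> Gg; elim: n => [|n IH]; first by rewrite expr1.
by rewrite exprSr -mulmxE; apply: GammaA_mul.
Qed.

Lemma GammaA_inv_mod g : GammaA A g ->
  exists2 h, GammaA A h & mx_congr q (h *m g) 1%:M.
Proof.
move=> Gg; have g_unit : g \in unitmx by rewrite unitmxE (det_GammaA Gg) unitr1.
have [[|n] // _ gm1] := unit_exp_congr1 q_gt0 g_unit.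
exists (g ^+ (n + n.+1)); first by rewrite addnS; apply: GammaA_exp.
have := mx_congrM gm1 gm1.
by rewrite !mulmxE mul1r -exprD -exprSr addSn.
Qed.

Definition Gamma_mod (M : 'M[int]_2) := exists2 g, GammaA A g & mx_congr q g M.

Lemma Gamma_modM M N : Gamma_mod M -> Gamma_mod N -> Gamma_mod (M *m N).
Proof.
move=> [g Gg gM] [h Gh hN]; exists (g *m h); first exact: GammaA_mul.
exact: mx_congrM.
Qed.

Lemma Gamma_mod_congr M N : Gamma_mod M -> mx_congr q M N -> Gamma_mod N.
Proof. by move=> [g Gg gM] MN; exists g => //; apply: mx_congr_trans MN. Qed.

Lemma Gamma_modV M M' : Gamma_mod M -> M *m M' = 1%:M -> Gamma_mod M'.
Proof.
move=> [g Gg gM] MM'; have [h Gh hg] := GammaA_inv_mod Gg.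
have hgM' : mx_congr q (h *m g *m M') M'.
  by have := mx_congrM hg (mx_congr_refl q M'); rewrite mul1mx.
exists h => //; rewrite -[h]mulmx1 -MM' mulmxA; apply: mx_congr_trans hgM'.
by apply/mx_congrM/mx_congr_refl; apply/mx_congrM/mx_congr_sym.
Qed.

Lemma Gamma_mod1 a : A a -> Gamma_mod 1%:M.
Proof.
move=> Aa; have Gg := GammaA_gen Aa Aa.
have [h Gh hg] := GammaA_inv_mod Gg.
by exists (h *m (gamma a *m gamma a)); first exact: GammaA_mul.
Qed.

Lemma Gamma_mod_adj g : GammaA A g ->
  [/\ Gamma_mod (\adj g), \adj g *m g = 1%:M & g *m \adj g = 1%:M].
Proof.
move=> Gg; rewrite mul_adj_mx mul_mx_adj det_GammaA //; split=> //.
apply: (Gamma_modV (M := g)); last by rewrite mul_mx_adj det_GammaA.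
by exists g.
Qed.

Lemma Gamma_mod_elemU_diff a c : A a -> A c -> Gamma_mod (elemU (a%:Z - c%:Z)).
Proof.
move=> Aa Ac; have [Gadj adjK _] := Gamma_mod_adj (GammaA_gen Ac Ac).
have -> : elemU (a%:Z - c%:Z) = \adj (gamma c *m gamma c) *m (gamma c *m gamma a).
  rewrite -[LHS]mul1mx -adjK -mulmxA; congr (_ *m _).
  by rewrite !gammaE /elemU !mulmx_mx2; congr mx2; ring.
by apply: Gamma_modM => //; exists (gamma c *m gamma a); first exact: GammaA_gen.
Qed.

Lemma Gamma_mod_elemL_diff a c : A a -> A c -> Gamma_mod (elemL (a%:Z - c%:Z)).
Proof.
move=> Aa Ac; have [Gadj _ adjK] := Gamma_mod_adj (GammaA_gen Ac Ac).
have -> : elemL (a%:Z - c%:Z) = (gamma a *m gamma c) *m \adj (gamma c *m gamma c).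
  rewrite -[LHS]mulmx1 -adjK mulmxA; congr (_ *m _).
  by rewrite !gammaE /elemL !mulmx_mx2; congr mx2; ring.
by apply: Gamma_modM => //; exists (gamma a *m gamma c); first exact: GammaA_gen.
Qed.

Lemma Gamma_mod_elem (F : int -> 'M[int]_2) :
  ~ (exists k : nat, (2 <= k)%N /\ in_progression A k) ->
  (forall s t, F s *m F t = F (s + t)) -> F 0 = 1%:M -> mx_congr q (F q%:Z) 1%:M ->
  (forall a c, A a -> A c -> Gamma_mod (F (a%:Z - c%:Z))) ->
  forall t, Gamma_mod (F t).
Proof.
move=> notAP FD F0 Fq Fdiff.
have [a0 Aa0] : exists a0, A a0.
  apply: contrapT => noA; apply: notAP; exists 2%N; split=> //.
  by exists 0 => a Aa; case: noA; exists a.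
have [|s t Ss St|d d_gt0 Sd] := @int_subgroup_dvdz (fun t => Gamma_mod (F t)) q q_gt0.
- exact: Gamma_mod_congr (Gamma_mod1 Aa0) (mx_congr_sym Fq).
- rewrite -FD; apply: Gamma_modM Ss (Gamma_modV St _).
  by rewrite FD subrr F0.
have d_eq1 : d = 1%N.
  apply/eqP; rewrite eqn_leq d_gt0 andbT leqNgt; apply/negP => d_gt1.
  apply: notAP; exists d; split=> //; exists a0%:Z => a Aa.
  by apply/eqP; rewrite eqz_mod_dvd; apply/Sd/Fdiff.
by move=> t; apply/Sd; rewrite d_eq1 dvd1z.
Qed.

End GammaModq.

Section SL2ModGenerated.
Variables (q : nat) (P : 'M[int]_2 -> Prop).
Hypotheses (PM : forall M N, P M -> P N -> P (M *m N))
  (P_congr : forall M N, P M -> mx_congr q M N -> P N)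
  (P_elemU : forall t, P (elemU t)) (P_elemL : forall t, P (elemL t)).

Lemma SL2_mod_lower a c d : (a * d = 1 %[mod q])%Z -> P (mx2 a 0 c d).
Proof.
move=> /eqP; rewrite eqz_mod_dvd => /dvdzP [k ad1].
(* Right multiplication by Y makes [mx2 a 0 c d] elementary up to a multiple of a d - 1. *)
pose Y := elemU d *m elemL (1 - a) *m elemU (- (a * d)).
pose X := elemU (a * d) *m elemL (a - 1) *m elemU (- d).
have YX : Y *m X = 1%:M by rewrite /Y /X /elemU /elemL !mulmx_mx2 mx2_1; congr mx2; ring.
have -> : mx2 a 0 c d = mx2 a 0 c d *m Y *m X by rewrite -mulmxA YX mulmx1.
apply: PM; last by apply: PM; [apply: PM|].
pose D := mx2 (1 - a) (a * d * (a - 1)) 0 (1 + (1 + c) * d * (a - 1)).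
have -> : mx2 a 0 c d *m Y =
    elemL (c * (1 + d - a * d) + d * (1 - a)) + ((a * d - 1) *: D).
  rewrite /Y /D /elemU /elemL !mulmx_mx2; apply/matrixP => i j; rewrite !mxE.
  by case: (ord2P i) => ->; case: (ord2P j) => -> /=; ring.
by rewrite ad1; apply: P_congr (P_elemL _) _; apply/mx_congr_sym/mx_congr_addZ.
Qed.

Lemma SL2_mod_generated M : (\det M = 1 %[mod q])%Z -> P M.
Proof.
have [n] := ubnP (absz (M 0 1)); elim: n M => // n IH M.
rewrite [M]mx2_eta; move: (M 0 0) (M 0 1) (M 1 0) (M 1 1) => a b c d lt_b.
have [-> | b_neq0] := eqVneq b 0.
  by rewrite det_mx2 mul0r subr0 => /SL2_mod_lower.
move=> detM.
pose s := - (a %/ b)%Z.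
pose J : 'M[int]_2 := mx2 0 1 (-1) 0; pose J' : 'M[int]_2 := mx2 0 (-1) 1 0.
have JJ' : J *m J' = 1%:M by rewrite mulmx_mx2 mx2_1; congr mx2; ring.
have LL' : elemL s *m elemL (- s) = 1%:M by rewrite elemLD subrr elemL0.
have -> : mx2 a b c d = mx2 a b c d *m elemL s *m J *m (J' *m elemL (- s)).
  by rewrite !mulmxA -[_ *m J *m J']mulmxA JJ' mulmx1 -mulmxA LL' mulmx1.
apply: PM; last first.
  have -> : J' = elemU (-1) *m elemL 1 *m elemU (-1).
    by rewrite /elemU /elemL !mulmx_mx2; congr mx2; ring.
  by apply: PM => //; apply: PM => //; apply: PM.
have -> : mx2 a b c d *m elemL s *m J = mx2 (- b) (a %% b)%Z (- d) (c + d * s).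
  by rewrite /elemL /J !mulmx_mx2 /modz /s; congr mx2; ring.
apply: IH; last first.
  suff -> : \det (mx2 (- b) (a %% b)%Z (- d) (c + d * s)) = \det (mx2 a b c d) by [].
  by rewrite !det_mx2 /modz /s; ring.
have lt_mod : (`|(a %% b)%Z| < `|b|)%N.
  by rewrite -ltz_nat gez0_abs ?modz_ge0 // abszE ltz_mod.
by rewrite mxE /=; apply: leq_trans lt_mod _; rewrite -ltnS; move: lt_b; rewrite mxE.
Qed.

End SL2ModGenerated.

Theorem theoremB1 (A : nat -> Prop) (hA : forall a, A a -> (0 < a)%N) :
  ~ everywhere_strong_approx A ->
  exists k : nat, (2 <= k)%N /\
    exists r : int, forall a, A a -> (a%:Z = r %[mod k%:Z])%Z.
Proof.
move=> not_approx; apply: contrapT => notAP; apply: not_approx => q q_gt0.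
split=> [g /det_GammaA -> // | M detM].
have elemU_mod := Gamma_mod_elem q_gt0 notAP (@elemUD _) (elemU0 _).
have elemL_mod := Gamma_mod_elem q_gt0 notAP (@elemLD _) (elemL0 _).
have period : (q%:Z = 0 %[mod q])%Z by rewrite modzz mod0z.
apply: (SL2_mod_generated (P := Gamma_mod A q)) detM.
- exact: Gamma_modM.
- exact: Gamma_mod_congr.
- apply: elemU_mod; last exact: Gamma_mod_elemU_diff.
  by rewrite mx2_1; apply: mx_congr_mx2.
- apply: elemL_mod; last exact: Gamma_mod_elemL_diff.
  by rewrite mx2_1; apply: mx_congr_mx2.
Qed.
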